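(* Let $L$ be a Skolem-free first-order language, $T$ an $L$ theory and $\Gamma$ a set of $L$ formulas. Then $\mathrm{GSI}^\omega_\Gamma(\mathit{sk}^\exists(T))\sqsubseteq_L T+\mathrm{IND}(\Gamma)$, i.e. every $L$ formula provable in $\mathrm{GSI}^\omega_\Gamma(\mathit{sk}^\exists(T))$ is provable in $T+\mathrm{IND}(\Gamma)$.
   Context: Skolem symbols $\mathfrak{s}_{Qx\varphi}$: for each formula $Qx\varphi$ ($Q\in\{\forall,\exists\}$) a new function symbol of arity $|\mathrm{FV}(Qx\varphi)|$; $L$ is Skolem-free if it contains none of the Skolem symbols obtainable (iteratively) over $L$. $\mathit{sk}^\exists$/$\mathit{sk}^\forall$: $\mathit{sk}^Q$ fixes atoms, commutes with $\wedge,\vee$, $\mathit{sk}^Q(\neg A)=\neg\mathit{sk}^{\overline Q}(A)$, $\mathit{sk}^Q(QxA(x,\vec y))=\mathit{sk}^Q(A(\mathfrak{s}_{QxA}(\vec y),\vec y))$ with $\vec y$ exactly the free variables of $QxA$, $\mathit{sk}^Q(\overline QxA)=\overline Qx\,\mathit{sk}^Q(A)$; elementwise on theories. $I_x\varphi=\forall\vec z(\varphi(0,\vec z)\wedge\forall x(\varphi(x,\vec z)\to\varphi(s(x),\vec z))\to\forall x\varphi(x,\vec z))$, $\mathrm{IND}(\Gamma)=\{I_x\gamma:\gamma\in\Gamma\}$. $\Gamma\downarrow L'=\{\gamma(\vec x,t_1,\dots,t_n):\gamma(\vec x,z_1,\dots,z_n)\in\Gamma,\ t_i$ ground $L'$ terms$\}$;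 $\Delta^-$ = formulas of $\Delta$ with at most one free variable; $\mathrm{GSI}_\Gamma(T)=T+\mathit{sk}^\exists(\mathrm{IND}((\Gamma\downarrow L(T))^-))$, $\mathrm{GSI}^\omega_\Gamma(T)=\bigcup_i\mathrm{GSI}^i_\Gamma(T)$ ($i$-fold iterations). *)

From Stdlib Require List.
From mathcomp Require Import ssreflect ssrfun ssrbool eqtype ssrnat seq.

Set Implicit Arguments.
Unset Strict Implicit.
Unset Printing Implicit Defensive.

Inductive quant := Qall | Qex.

Definition qdual (Q : quant) := if Q is Qall then Qex else Qall.

Section Syntax.
(* The Skolem-free base language L: base function symbols F (with arities
   arF, containing the constant zero and unary succ) and predicate symbols Pr.
   The full language is L together with all Skolem symbols obtainable
   (iteratively) over L: a function symbol is either a base symbol or a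
   Skolem symbol  skol Q B  standing for  s_{Q x B}. *)
Variables (F Pr : Type).

Inductive term :=
  | var : nat -> term
  | app : fsym -> list term -> term
with fsym :=
  | base : F -> fsym
  | skol : quant -> formula -> fsym
with formula :=
  | Atom : Pr -> list term -> formula
  | Eq   : term -> term -> formula
  | Neg  : formula -> formula
  | And  : formula -> formula -> formula
  | Or   : formula -> formula -> formula
  | All  : formula -> formula            (* binds de Bruijn index 0 *)
  | Ex   : formula -> formula.

Definition quantf (Q : quant) (B : formula) :=
  if Q is Qall then All B else Ex B.

Definition Imp (A B : formula) := Or (Neg A) B.

Fixpoint tsubst (s : nat -> term) (t : term) : term :=
  match t with
  | var n => s n
  | app f ts => app f (map (tsubst s) ts)
  end.

Definition up (s : nat -> term) : nat -> term :=
  fun n => match n with 0 => var 0 | k.+1 => tsubst (fun i => var i.+1) (s k) end.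

Fixpoint fsubst (s : nat -> term) (A : formula) : formula :=
  match A with
  | Atom p ts => Atom p (map (tsubst s) ts)
  | Eq t u => Eq (tsubst s t) (tsubst s u)
  | Neg B => Neg (fsubst s B)
  | And B C => And (fsubst s B) (fsubst s C)
  | Or B C => Or (fsubst s B) (fsubst s C)
  | All B => All (fsubst (up s) B)
  | Ex B => Ex (fsubst (up s) B)
  end.

Definition shiftf := fsubst (fun i => var i.+1).

(* substitute t for index 0, and decrement the other indices *)
Definition inst (t : term) : nat -> term :=
  fun n => match n with 0 => t | k.+1 => var k end.

Fixpoint occt (n : nat) (t : term) : bool :=
  match t with
  | var m => m == n
  | app _ ts => has (occt n) ts
  end.

Fixpoint occf (n : nat) (A : formula) : bool :=
  match A with
  | Atom _ ts => has (occt n) ts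
  | Eq t u => occt n t || occt n u
  | Neg B => occf n B
  | And B C | Or B C => occf n B || occf n C
  | All B | Ex B => occf n.+1 B
  end.

(* an upper bound (strict) on the free variables *)
Fixpoint tbound (t : term) : nat :=
  match t with
  | var n => n.+1
  | app _ ts => foldr maxn 0 (map tbound ts)
  end.

Fixpoint fbound (A : formula) : nat :=
  match A with
  | Atom _ ts => foldr maxn 0 (map tbound ts)
  | Eq t u => maxn (tbound t) (tbound u)
  | Neg B => fbound B
  | And B C | Or B C => maxn (fbound B) (fbound C)
  | All B | Ex B => (fbound B).-1
  end.

(* FV(A), as the increasing list of its free variables *)
Definition fvs (A : formula) : seq nat := filter (fun i => occf i A) (iota 0 (fbound A)).

(* Skolemization sk^Q, with an accumulated substitution:
   skS Q s A = sk^Q (A[s]). *)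
Fixpoint skS (Q : quant) (s : nat -> term) (A : formula) : formula :=
  match A with
  | Atom p ts => Atom p (map (tsubst s) ts)
  | Eq t u => Eq (tsubst s t) (tsubst s u)
  | Neg B => Neg (skS (qdual Q) s B)
  | And B C => And (skS Q s B) (skS Q s C)
  | Or B C => Or (skS Q s B) (skS Q s C)
  | All B =>
      if Q is Qall then
        let B' := fsubst (up s) B in
        let sk := app (skol Qall B') (map var (fvs (All B'))) in
        skS Q (fun n => match n with 0 => sk | k.+1 => s k end) B
      else All (skS Q (up s) B)
  | Ex B =>
      if Q is Qex then
        let B' := fsubst (up s) B in
        let sk := app (skol Qex B') (map var (fvs (Ex B'))) in
        skS Q (fun n => match n with 0 => sk | k.+1 => s k end) B
      else Ex (skS Q (up s) B)
  end.

Definition sk (Q : quant) (A : formula) : formula := skS Q var A.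

Definition theory := formula -> Prop.

Definition sk_th (Q : quant) (T : theory) : theory :=
  fun A => exists2 B, T B & A = sk Q B.

Definition th_union (T U : theory) : theory := fun A => T A \/ U A.

Variables (arF : F -> nat) (arP : Pr -> nat) (zero succ : F).

Definition arity (f : fsym) : nat :=
  match f with
  | base g => arF g
  | skol Q B => size (fvs (quantf Q B))
  end.

Fixpoint termIn (P : fsym -> Prop) (t : term) : Prop :=
  match t with
  | var _ => True
  | app f ts => [/\ P f, size ts = arity f & foldr (fun u Q => termIn P u /\ Q) True ts]
  end.

Fixpoint formIn (P : fsym -> Prop) (A : formula) : Prop :=
  match A with
  | Atom p ts => size ts = arP p /\ foldr (fun u Q => termIn P u /\ Q) True ts
  | Eq t u => termIn P t /\ termIn P u
  | Neg B => formIn P B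
  | And B C | Or B C => formIn P B /\ formIn P C
  | All B | Ex B => formIn P B
  end.

Definition isBase (f : fsym) : Prop := exists g, f = base g.

Definition wf_term (t : term) := termIn (fun _ => True) t.

Definition Lformula (A : formula) : Prop := formIn isBase A.

Definition Ltheory (T : theory) : Prop := forall A, T A -> Lformula A.

Fixpoint symt (f : fsym) (t : term) : Prop :=
  match t with
  | var _ => False
  | app g ts => g = f \/ foldr (fun u Q => symt f u \/ Q) False ts
  end.

Fixpoint symf (f : fsym) (A : formula) : Prop :=
  match A with
  | Atom _ ts => foldr (fun u Q => symt f u \/ Q) False ts
  | Eq t u => symt f t \/ symt f u
  | Neg B => symf f B
  | And B C | Or B C => symf f B \/ symf f C
  | All B | Ex B => symf f B
  end.

Definition langOf (T : theory) : fsym -> Prop :=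
  fun f => isBase f \/ exists2 A, T A & symf f A.

Definition ground (t : term) : Prop := tbound t = 0.

Definition down (G : theory) (L' : fsym -> Prop) : theory :=
  fun A => exists g s, [/\ G g,
      (forall j, s j = var j \/ (ground (s j) /\ termIn L' (s j))) & A = fsubst s g].

Definition minus (D : theory) : theory := fun A => D A /\ size (fvs A) <= 1.

(* induction formula with induction variable index 0, parameters 1,2,...
   (universally closed) *)
Definition Ind0 (phi : formula) : formula :=
  let s0 := fun n => match n with 0 => app (base zero) [::] | k.+1 => var k end in
  let ss := fun n => match n with 0 => app (base succ) [:: var 0] | k.+1 => var k.+1 end in
  iter (fbound phi).-1 All
    (Imp (And (fsubst s0 phi) (All (Imp phi (fsubst ss phi)))) (All phi)).

Definition Ix (x : nat) (phi : formula) : formula :=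
  Ind0 (fsubst (fun j => if j == x then var 0 else var j.+1) phi).

Definition IND (G : theory) : theory := fun A => exists x g, G g /\ A = Ix x g.

Definition GSI (G T : theory) : theory :=
  th_union T (sk_th Qex (IND (minus (down G (langOf T))))).

Definition GSIomega (G T : theory) : theory :=
  fun A => exists i, iter i (GSI G) T A.

Inductive nd : seq formula -> formula -> Prop :=
  | nd_ax G A : List.In A G -> nd G A
  | nd_andI G A B : nd G A -> nd G B -> nd G (And A B)
  | nd_andE1 G A B : nd G (And A B) -> nd G A
  | nd_andE2 G A B : nd G (And A B) -> nd G B
  | nd_orI1 G A B : nd G A -> nd G (Or A B)
  | nd_orI2 G A B : nd G B -> nd G (Or A B)
  | nd_orE G A B C : nd G (Or A B) -> nd (A :: G) C -> nd (B :: G) C -> nd G C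
  | nd_negI G A B : nd (A :: G) B -> nd (A :: G) (Neg B) -> nd G (Neg A)
  | nd_raa G A B : nd (Neg A :: G) B -> nd (Neg A :: G) (Neg B) -> nd G A
  | nd_allI G A : nd (map shiftf G) A -> nd G (All A)
  | nd_allE G A t : wf_term t -> nd G (All A) -> nd G (fsubst (inst t) A)
  | nd_exI G A t : wf_term t -> nd G (fsubst (inst t) A) -> nd G (Ex A)
  | nd_exE G A B : nd G (Ex A) -> nd (A :: map shiftf G) (shiftf B) -> nd G B
  | nd_refl G t : wf_term t -> nd G (Eq t t)
  | nd_subst G A s t : nd G (Eq s t) -> nd G (fsubst (inst s) A) ->
                       nd G (fsubst (inst t) A).

Definition provable (T : theory) (A : formula) : Prop :=
  exists D : seq formula, (forall B, List.In B D -> T B) /\ nd D A.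

End Syntax.

(* Every structure for L expands to the Skolem symbols by interpreting
   s_{QxB} as a Hilbert-choice witness of QxB (a counterexample when Q is the
   universal quantifier).  In such an expansion A implies sk^Ex(A), and I_x g
   implies I_x of every instance of g by ground terms, since those denote fixed
   elements.  So the expansion of a model of T + IND(Gamma) satisfies every
   axiom of GSI^omega_Gamma(sk^Ex(T)), hence by soundness every formula it
   proves; on L formulas the expansion agrees with the original structure.
   Completeness for L formulas, proved by a Henkin construction over the
   countable sublanguage generated by finitely many base symbols, concludes. *)

From Pilot Require Import Defs.
From mathcomp Require Import ssreflect ssrfun ssrbool eqtype ssrnat seq choice.
From Stdlib Require Import FunctionalExtensionality PropExtensionality ClassicalEpsilon Classical.

Set Implicit Arguments.
Unset Strict Implicit.
Unset Printing Implicit Defensive.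

Section Syntax.
Variables (F Pr : Type).
Local Notation term := (term F Pr).
Local Notation formula := (formula F Pr).
Local Notation fsym := (Defs.fsym F Pr).
Local Notation var := (var F Pr).
Local Notation shiftf := (@shiftf F Pr).
Implicit Types (t u : term) (A B C : formula) (s r : nat -> term) (Gm : seq formula).

(** * Syntax and substitution *)

Section MutualInduction.
Variables (Pt : term -> Prop) (Ps : fsym -> Prop) (Pf : formula -> Prop).
Hypotheses (Hvar : forall n, Pt (var n))
  (Happ : forall f ts, Ps f -> List.Forall Pt ts -> Pt (app f ts))
  (Hbase : forall g, Ps (base Pr g))
  (Hskol : forall Q B, Pf B -> Ps (skol Q B))
  (HAtom : forall p ts, List.Forall Pt ts -> Pf (Atom p ts))
  (HEq : forall t u, Pt t -> Pt u -> Pf (Eq t u))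
  (HNeg : forall B, Pf B -> Pf (Neg B))
  (HAnd : forall B C, Pf B -> Pf C -> Pf (And B C))
  (HOr : forall B C, Pf B -> Pf C -> Pf (Or B C))
  (HAll : forall B, Pf B -> Pf (All B))
  (HEx : forall B, Pf B -> Pf (Ex B)).

Fixpoint syntax_term_ind (t : term) : Pt t :=
  match t with
  | Defs.var n => Hvar n
  | app f ts => Happ (syntax_fsym_ind f)
      ((fix args (l : seq term) : List.Forall Pt l :=
          match l with
          | [::] => List.Forall_nil _
          | u :: l' => List.Forall_cons _ (syntax_term_ind u) (args l')
          end) ts)
  end
with syntax_fsym_ind (f : fsym) : Ps f :=
  match f with
  | base g => Hbase g
  | skol Q B => Hskol Q (syntax_formula_ind B)
  end
with syntax_formula_ind (A : formula) : Pf A :=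
  match A with
  | Atom p ts => HAtom p
      ((fix args (l : seq term) : List.Forall Pt l :=
          match l with
          | [::] => List.Forall_nil _
          | u :: l' => List.Forall_cons _ (syntax_term_ind u) (args l')
          end) ts)
  | Eq t u => HEq (syntax_term_ind t) (syntax_term_ind u)
  | Neg B => HNeg (syntax_formula_ind B)
  | And B C => HAnd (syntax_formula_ind B) (syntax_formula_ind C)
  | Or B C => HOr (syntax_formula_ind B) (syntax_formula_ind C)
  | All B => HAll (syntax_formula_ind B)
  | Ex B => HEx (syntax_formula_ind B)
  end.
End MutualInduction.

Lemma term_ind' (P : term -> Prop) :
  (forall n, P (var n)) -> (forall f ts, List.Forall P ts -> P (app f ts)) ->
  forall t, P t.
Proof.
move=> Hvar Happ.
by apply: (@syntax_term_ind P (fun _ => True) (fun _ => True)) => // f ts _; apply: Happ.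
Qed.

Lemma eq_map_Forall (X Y : Type) (f g : X -> Y) (l : seq X) :
  List.Forall (fun x => f x = g x) l -> map f l = map g l.
Proof. by elim=> //= x l' -> _ ->. Qed.

Lemma eq_map_In (X Y : Type) (f g : X -> Y) (l : seq X) :
  (forall x, List.In x l -> f x = g x) -> map f l = map g l.
Proof. by move=> H; apply: eq_map_Forall; apply/List.Forall_forall. Qed.

Lemma has_In (X : Type) (p : pred X) l : has p l <-> exists2 x, List.In x l & p x.
Proof.
elim: l => /= [|y l IH]; first by split=> // -[].
split=> [/orP [Hy|/IH [x Hx Hpx]]|[x [<-|Hx] Hpx]].
- by exists y; [left|].
- by exists x; [right|].
- by rewrite Hpx.
- by apply/orP; right; apply/IH; exists x.
Qed.

Lemma foldr_andP (P : term -> Prop) (ts : seq term) :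
  foldr (fun u Q => P u /\ Q) True ts <-> (forall u, List.In u ts -> P u).
Proof.
elim: ts => /= [|t ts IH]; first by split.
split=> [[Ht /IH Hts] u [<-|Hu] //|H]; first exact: Hts.
by split; [apply: H; left|apply/IH => u Hu; apply: H; right].
Qed.

Lemma foldr_maxn_ub (X : Type) (h : X -> nat) l x :
  List.In x l -> h x <= foldr maxn 0 (map h l).
Proof.
elim: l => //= y l IH [<-|Hx]; first exact: leq_maxl.
exact: leq_trans (IH Hx) (leq_maxr _ _).
Qed.

Lemma foldr_maxn_lub (X : Type) (h : X -> nat) l b :
  (forall x, List.In x l -> h x <= b) -> foldr maxn 0 (map h l) <= b.
Proof.
elim: l => //= y l IH H; rewrite geq_max H ?IH //; last by left.
by move=> x Hx; apply: H; right.
Qed.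

Definition shiftt := tsubst (fun i => var i.+1).
Definition scomp (s r : nat -> term) := fun n => tsubst r (s n).

Lemma tsubst_comp t s r : tsubst r (tsubst s t) = tsubst (scomp s r) t.
Proof.
elim/term_ind': t s r => //= f ts IH s r.
by rewrite -map_comp; congr app; apply: eq_map_Forall; apply: List.Forall_impl IH => u; apply.
Qed.

Lemma up_comp s r : scomp (up s) (up r) = up (scomp s r).
Proof.
by apply: functional_extensionality => -[|n] //; rewrite /scomp /= !tsubst_comp.
Qed.

Lemma fsubst_comp A s r : fsubst r (fsubst s A) = fsubst (scomp s r) A.
Proof.
elim: A s r => /= [p ts|t u|B IH|B IH C IH'|B IH C IH'|B IH|B IH] s r;
  rewrite ?IH ?IH' ?up_comp ?tsubst_comp //.
by rewrite -map_comp; congr Atom; apply: eq_map_In => u _ /=; apply: tsubst_comp.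
Qed.

Lemma tsubst_var t : tsubst var t = t.
Proof.
elim/term_ind': t => //= f ts IH.
by congr app; rewrite -[RHS]map_id; apply: eq_map_Forall.
Qed.

Lemma up_var : up var = var.
Proof. by apply: functional_extensionality => -[|n]. Qed.

Lemma fsubst_var A : fsubst var A = A.
Proof.
elim: A => /= [p ts|t u|B IH|B IH C IH'|B IH C IH'|B IH|B IH];
  rewrite ?up_var ?tsubst_var ?IH ?IH' //.
by congr Atom; rewrite -[RHS]map_id; apply: eq_map_In => u _; apply: tsubst_var.
Qed.

Lemma tsubst_ext t s r : (forall n, n < tbound t -> s n = r n) -> tsubst s t = tsubst r t.
Proof.
elim/term_ind': t => [n /= H|f ts IH H] /=; first exact: H.
congr app; apply: eq_map_In => u Hu.
move/List.Forall_forall: IH => /(_ u Hu); apply => n Hn; apply: H.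
exact: leq_trans Hn (foldr_maxn_ub _ Hu).
Qed.

Lemma fsubst_ext A s r : (forall n, n < fbound A -> s n = r n) -> fsubst s A = fsubst r A.
Proof.
elim: A s r => /= [p ts|t u|B IH|B IH C IH'|B IH C IH'|B IH|B IH] s r H.
- congr Atom; apply: eq_map_In => u Hu; apply: tsubst_ext => n Hn; apply: H.
  exact: leq_trans Hn (foldr_maxn_ub _ Hu).
- by rewrite (@tsubst_ext t s r) ?(@tsubst_ext u s r) // => n Hn; apply: H;
    rewrite leq_max Hn ?orbT.
- by rewrite (IH s r).
- by rewrite (IH s r) ?(IH' s r) // => n Hn; apply: H; rewrite leq_max Hn ?orbT.
- by rewrite (IH s r) ?(IH' s r) // => n Hn; apply: H; rewrite leq_max Hn ?orbT.
- rewrite (IH (up s) (up r)) // => -[|n] Hn //=; rewrite H //.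
  by move: Hn; case: (fbound B).
- rewrite (IH (up s) (up r)) // => -[|n] Hn //=; rewrite H //.
  by move: Hn; case: (fbound B).
Qed.

Lemma occt_bound n t : occt n t -> n < tbound t.
Proof.
elim/term_ind': t => [m /eqP -> //|f ts IH] /= /has_In [u Hu Hn].
move/List.Forall_forall: IH => /(_ u Hu Hn) H.
exact: leq_trans H (foldr_maxn_ub _ Hu).
Qed.

Lemma occf_bound A n : occf n A -> n < fbound A.
Proof.
elim: A n => /= [p ts|t u|B IH|B IH C IH'|B IH C IH'|B IH|B IH] n.
- by case/has_In=> u Hu /occt_bound Hn; apply: leq_trans Hn (foldr_maxn_ub _ Hu).
- by case/orP=> /occt_bound Hn; rewrite leq_max Hn ?orbT.
- exact: IH.
- by case/orP=> [/IH|/IH'] Hn; rewrite leq_max Hn ?orbT.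
- by case/orP=> [/IH|/IH'] Hn; rewrite leq_max Hn ?orbT.
- by move/IH; case: (fbound B).
- by move/IH; case: (fbound B).
Qed.

Lemma tbound_subst t s b :
  (forall n, n < tbound t -> tbound (s n) <= b) -> tbound (tsubst s t) <= b.
Proof.
elim/term_ind': t => [n /= H|f ts IH H] /=; first exact: H.
rewrite -map_comp; apply: foldr_maxn_lub => u Hu /=.
move/List.Forall_forall: IH => /(_ u Hu); apply => n Hn; apply: H.
exact: leq_trans Hn (foldr_maxn_ub _ Hu).
Qed.

Lemma tbound_shift t : tbound (shiftt t) <= (tbound t).+1.
Proof. exact: tbound_subst. Qed.

Lemma fbound_subst A s b :
  (forall n, n < fbound A -> tbound (s n) <= b) -> fbound (fsubst s A) <= b.
Proof.
have fbound_up B s' b' : (forall n, n < (fbound B).-1 -> tbound (s' n) <= b') ->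
    forall n, n < fbound B -> tbound (up s' n) <= b'.+1.
  move=> H [|n] Hn //=; apply: leq_trans (tbound_shift _) _; rewrite ltnS; apply: H.
  by move: Hn; case: (fbound B).
elim: A s b => /= [p ts|t u|B IH|B IH C IH'|B IH C IH'|B IH|B IH] s b H.
- rewrite -map_comp; apply: foldr_maxn_lub => u Hu /=; apply: tbound_subst => n Hn.
  by apply: H; apply: leq_trans Hn (foldr_maxn_ub _ Hu).
- by rewrite geq_max !tbound_subst // => n Hn; apply: H; rewrite leq_max Hn ?orbT.
- exact: IH.
- by rewrite geq_max IH ?IH' // => n Hn; apply: H; rewrite leq_max Hn ?orbT.
- by rewrite geq_max IH ?IH' // => n Hn; apply: H; rewrite leq_max Hn ?orbT.
- by rewrite -subn1 leq_subLR add1n; apply/IH/fbound_up.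
- by rewrite -subn1 leq_subLR add1n; apply/IH/fbound_up.
Qed.

Lemma fsubst_up_shift s A : fsubst (up s) (shiftf A) = shiftf (fsubst s A).
Proof. by rewrite /shiftf !fsubst_comp. Qed.

Lemma fsubst_inst s t A :
  fsubst s (fsubst (inst t) A) = fsubst (inst (tsubst s t)) (fsubst (up s) A).
Proof.
rewrite !fsubst_comp; congr fsubst; apply: functional_extensionality => -[|n] //=.
by rewrite /scomp /= tsubst_comp tsubst_var.
Qed.

Lemma tsubst_inst_shift t u : tsubst (inst t) (shiftt u) = u.
Proof. by rewrite /shiftt tsubst_comp tsubst_var. Qed.

(** * Natural deduction *)

Variable arF : F -> nat.
Local Notation nd := (@nd F Pr arF).
Local Notation wf := (@wf_term F Pr arF).

Lemma termIn_tsubst (Ps : fsym -> Prop) t s :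
  termIn arF Ps t -> (forall n, termIn arF Ps (s n)) -> termIn arF Ps (tsubst s t).
Proof.
elim/term_ind': t => [n|f ts IH] //= [Hf Hsize /foldr_andP Hts] Hs.
split; rewrite ?size_map //; apply/foldr_andP => _ /List.in_map_iff [u [<- Hu]].
by move/List.Forall_forall: IH => /(_ u Hu (Hts u Hu)); apply.
Qed.

Lemma termIn_up (Ps : fsym -> Prop) s :
  (forall n, termIn arF Ps (s n)) -> forall n, termIn arF Ps (up s n).
Proof. by move=> Hs [|n] //=; apply: termIn_tsubst. Qed.

Lemma incl_cons2 (X : Type) (x : X) l l' : List.incl l l' -> List.incl (x :: l) (x :: l').
Proof. by move=> H y [<-|Hy]; [left|right; apply: H]. Qed.

Lemma nd_weaken Gm A : nd Gm A -> forall Gm', List.incl Gm Gm' -> nd Gm' A.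
Proof.
elim=> {Gm A} Gm.
- by move=> A HA Gm' H; apply/nd_ax/H.
- by move=> A B _ HA _ HB Gm' H; apply: nd_andI; [apply: HA|apply: HB].
- by move=> A B _ HAB Gm' H; apply: nd_andE1 (HAB _ H).
- by move=> A B _ HAB Gm' H; apply: nd_andE2 (HAB _ H).
- by move=> A B _ HA Gm' H; apply/nd_orI1/HA.
- by move=> A B _ HB Gm' H; apply/nd_orI2/HB.
- move=> A B C _ HAB _ HA _ HB Gm' H.
  by apply: nd_orE (HAB _ H) (HA _ _) (HB _ _); apply: incl_cons2.
- move=> A B _ HB _ HnB Gm' H.
  by apply: nd_negI (HB _ _) (HnB _ _); apply: incl_cons2.
- move=> A B _ HB _ HnB Gm' H.
  by apply: nd_raa (HB _ _) (HnB _ _); apply: incl_cons2.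
- by move=> A _ HA Gm' H; apply/nd_allI/HA/List.incl_map.
- by move=> A t Ht _ HA Gm' H; apply/nd_allE/HA.
- by move=> A t Ht _ HA Gm' H; apply: nd_exI Ht (HA _ H).
- move=> A B _ HA _ HB Gm' H.
  by apply: nd_exE (HA _ H) (HB _ _); apply/incl_cons2/List.incl_map.
- by move=> t Ht Gm' H; apply: nd_refl.
- by move=> A t u _ Htu _ HA Gm' H; apply: nd_subst (Htu _ H) (HA _ H).
Qed.

Lemma map_shiftf_fsubst s Gm :
  map (fsubst (up s)) (map shiftf Gm) = map shiftf (map (fsubst s) Gm).
Proof. by rewrite -!map_comp; apply: eq_map => B /=; rewrite fsubst_up_shift. Qed.

Lemma nd_fsubst Gm A : nd Gm A ->
  forall s, (forall n, wf (s n)) -> nd (map (fsubst s) Gm) (fsubst s A).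
Proof.
elim=> {Gm A} Gm.
- by move=> A HA s Hs; apply/nd_ax/List.in_map.
- by move=> A B _ HA _ HB s Hs; apply: nd_andI; [apply: HA|apply: HB].
- by move=> A B _ HAB s Hs; apply: nd_andE1 (HAB _ Hs).
- by move=> A B _ HAB s Hs; apply: nd_andE2 (HAB _ Hs).
- by move=> A B _ HA s Hs; apply/nd_orI1/HA.
- by move=> A B _ HB s Hs; apply/nd_orI2/HB.
- by move=> A B C _ HAB _ HA _ HB s Hs; apply: nd_orE (HAB _ Hs) (HA _ Hs) (HB _ Hs).
- by move=> A B _ HB _ HnB s Hs; apply: nd_negI (HB _ Hs) (HnB _ Hs).
- by move=> A B _ HB _ HnB s Hs; apply: nd_raa (HB _ Hs) (HnB _ Hs).
- move=> A _ HA s Hs; apply: nd_allI.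
  by rewrite -map_shiftf_fsubst; apply/HA/termIn_up.
- move=> A t Ht _ HA s Hs; rewrite fsubst_inst.
  by apply: nd_allE (HA _ Hs); apply: termIn_tsubst.
- move=> A t Ht _ HA s Hs; apply: (nd_exI (t := tsubst s t)); first exact: termIn_tsubst.
  by rewrite -fsubst_inst; apply: HA.
- move=> A B _ HA _ HB s Hs; apply: nd_exE (HA _ Hs) _.
  by rewrite -fsubst_up_shift -map_shiftf_fsubst; apply: (HB (up s)); apply: termIn_up.
- by move=> t Ht s Hs; apply/nd_refl/termIn_tsubst.
- move=> A t u _ Htu _ HA s Hs; rewrite fsubst_inst.
  by apply: nd_subst (Htu _ Hs) _; rewrite -fsubst_inst; apply: HA.
Qed.

Lemma nd_head {Gm A} : nd (A :: Gm) A.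
Proof. by apply: nd_ax; left. Qed.

Lemma nd_absurd Gm C X : nd Gm C -> nd Gm (Neg C) -> nd Gm X.
Proof.
move=> HC HnC; apply: (nd_raa (B := C)); [apply: (nd_weaken HC)|apply: (nd_weaken HnC)];
  by move=> B HB; right.
Qed.

Lemma nd_not_all Gm A : nd Gm (Neg (All A)) -> nd Gm (Ex (Neg A)).
Proof.
move=> H; apply: (nd_raa (B := All A)); last by apply: (nd_weaken H) => C HC; right.
apply: nd_allI => /=; apply: (nd_raa (B := shiftf (Ex (Neg A)))).
- apply: (nd_exI (t := var 0)) => //=.
  suff -> : fsubst (inst (var 0)) (fsubst (up (fun i => var i.+1)) A) = A by exact: nd_head.
  rewrite fsubst_comp -[RHS]fsubst_var; congr fsubst.
  by apply: functional_extensionality => -[|n].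
- by apply: nd_ax; right; left.
Qed.

Lemma nd_eq_sym Gm t u : wf t -> nd Gm (Eq t u) -> nd Gm (Eq u t).
Proof.
move=> Ht Htu; have := @nd_subst _ _ _ Gm (Eq (var 0) (shiftt t)) t u Htu.
by rewrite /= !tsubst_inst_shift; apply; apply: nd_refl.
Qed.

Lemma nd_eq_trans Gm t u w : nd Gm (Eq t u) -> nd Gm (Eq u w) -> nd Gm (Eq t w).
Proof.
move=> Htu Huw; have := @nd_subst _ _ _ Gm (Eq (shiftt t) (var 0)) u w Huw.
by rewrite /= !tsubst_inst_shift; apply.
Qed.

Lemma map_tsubst_inst_shift t ts : map (tsubst (inst t)) (map shiftt ts) = ts.
Proof. by elim: ts => //= u ts ->; rewrite tsubst_inst_shift. Qed.

Lemma tsubst_inst_hole t pre post :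
  map (tsubst (inst t)) (map shiftt pre ++ var 0 :: map shiftt post) = pre ++ t :: post.
Proof. by rewrite map_cat /= !map_tsubst_inst_shift. Qed.

(* [Phi] is a context with one hole at any argument position, so provable
   equalities can be substituted into the arguments one at a time. *)
Lemma nd_rewrite_args Gm (Phi : seq term -> formula) :
  (forall pre post, exists A, forall t, fsubst (inst t) A = Phi (pre ++ t :: post)) ->
  forall ts us, List.Forall2 (fun t u => nd Gm (Eq t u)) ts us ->
  forall pre, nd Gm (Phi (pre ++ ts)) -> nd Gm (Phi (pre ++ us)).
Proof.
move=> HPhi ts us; elim=> {ts us} // t u ts us Htu _ IH pre H.
have [A HA] := HPhi pre us; rewrite -HA; apply: nd_subst Htu _; rewrite HA.
by have := IH (rcons pre t); rewrite !cat_rcons; apply.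
Qed.

Lemma nd_cong_atom Gm p ts us : List.Forall2 (fun t u => nd Gm (Eq t u)) ts us ->
  nd Gm (Atom p ts) -> nd Gm (Atom p us).
Proof.
move=> H; apply: (@nd_rewrite_args Gm (Atom p) _ _ _ H [::]) => pre post.
by exists (Atom p (map shiftt pre ++ var 0 :: map shiftt post)) => t /=; rewrite tsubst_inst_hole.
Qed.

Lemma nd_cong_app Gm f ts us : List.Forall2 (fun t u => nd Gm (Eq t u)) ts us ->
  wf (app f ts) -> nd Gm (Eq (app f ts) (app f us)).
Proof.
move=> H Hw; apply: (@nd_rewrite_args Gm (fun l => Eq (app f ts) (app f l)) _ _ _ H [::]).
- move=> pre post.
  exists (Eq (shiftt (app f ts)) (app f (map shiftt pre ++ var 0 :: map shiftt post))).
  move=> t /=; rewrite tsubst_inst_hole; congr Eq.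
  exact: (tsubst_inst_shift t (app f ts)).
- exact: nd_refl.
Qed.

(** * Semantics and soundness *)

Lemma eq_forall (X : Type) (P Q : X -> Prop) :
  (forall x, P x = Q x) -> (forall x, P x) = (forall x, Q x).
Proof. by move=> H; have -> : P = Q by apply: functional_extensionality. Qed.

Lemma eq_exists (X : Type) (P Q : X -> Prop) :
  (forall x, P x = Q x) -> (exists x, P x) = (exists x, Q x).
Proof. by move=> H; have -> : P = Q by apply: functional_extensionality. Qed.

Section Semantics.
Variables (D : Type) (eqv : D -> D -> Prop) (P : Pr -> seq D -> Prop).
Implicit Types (v w : nat -> D) (d e : D).

Definition scons d v : nat -> D := fun n => if n is k.+1 then v k else d.

Fixpoint teval (I : fsym -> seq D -> D) v t : D :=
  match t with Defs.var n => v n | app f ts => I f (map (teval I v) ts) end.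

(* [eqv] interprets the equality symbol; it need not be identity. *)
Fixpoint feval (I : fsym -> seq D -> D) v A : Prop :=
  match A with
  | Atom p ts => P p (map (teval I v) ts)
  | Eq t u => eqv (teval I v t) (teval I v u)
  | Neg B => ~ feval I v B
  | And B C => feval I v B /\ feval I v C
  | Or B C => feval I v B \/ feval I v C
  | All B => forall d, feval I (scons d v) B
  | Ex B => exists d, feval I (scons d v) B
  end.

Variable I : fsym -> seq D -> D.

Lemma teval_subst t v s : teval I v (tsubst s t) = teval I (fun n => teval I v (s n)) t.
Proof.
elim/term_ind': t => //= f ts IH; congr I; rewrite -map_comp; apply: eq_map_Forall.
by apply: List.Forall_impl IH => u; apply.
Qed.

Lemma teval_up v s d : (fun n => teval I (scons d v) (up s n)) = scons d (fun n => teval I v (s n)).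
Proof. by apply: functional_extensionality => -[|n] //=; rewrite teval_subst. Qed.

Lemma feval_subst A v s : feval I v (fsubst s A) = feval I (fun n => teval I v (s n)) A.
Proof.
elim: A v s => /= [p ts|t u|B IH|B IH C IH'|B IH C IH'|B IH|B IH] v s;
  rewrite ?teval_subst ?IH ?IH' //.
- by rewrite -map_comp; congr P; apply: eq_map_In => u _ /=; rewrite teval_subst.
- by apply: eq_forall => d; rewrite IH teval_up.
- by apply: eq_exists => d; rewrite IH teval_up.
Qed.

Lemma feval_shift v d A : feval I (scons d v) (shiftf A) = feval I v A.
Proof. by rewrite /shiftf feval_subst. Qed.

Lemma feval_inst v t A : feval I v (fsubst (inst t) A) = feval I (scons (teval I v t) v) A.
Proof. by rewrite feval_subst; congr feval; apply: functional_extensionality => -[|n]. Qed.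

Lemma eq_teval t v w : (forall n, occt n t -> v n = w n) -> teval I v t = teval I w t.
Proof.
elim/term_ind': t => [n /= H|f ts IH H] /=; first by apply: H; rewrite /= eqxx.
congr I; apply: eq_map_In => u Hu; move/List.Forall_forall: IH => /(_ u Hu); apply.
by move=> n Hn; apply: H => /=; apply/has_In; exists u.
Qed.

Lemma eq_feval A v w : (forall n, occf n A -> v n = w n) -> feval I v A = feval I w A.
Proof.
elim: A v w => /= [p ts|t u|B IH|B IH C IH'|B IH C IH'|B IH|B IH] v w H.
- congr P; apply: eq_map_In => u Hu; apply: eq_teval => n Hn; apply: H.
  by apply/has_In; exists u.
- by rewrite (@eq_teval t v w) ?(@eq_teval u v w) // => n Hn; apply: H; rewrite Hn ?orbT.
- by rewrite (IH v w).
- by rewrite (IH v w) ?(IH' v w) // => n Hn; apply: H; rewrite Hn ?orbT.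
- by rewrite (IH v w) ?(IH' v w) // => n Hn; apply: H; rewrite Hn ?orbT.
- by apply: eq_forall => d; apply: IH => -[|n] //= Hn; apply: H.
- by apply: eq_exists => d; apply: IH => -[|n] //= Hn; apply: H.
Qed.

Lemma eq_feval_bound A v w : (forall n, n < fbound A -> v n = w n) -> feval I v A = feval I w A.
Proof. by move=> H; apply: eq_feval => n /occf_bound; apply: H. Qed.

End Semantics.

Record congruence (X D : Type) (eqv : D -> D -> Prop) (P : Pr -> seq D -> Prop)
    (I : X -> seq D -> D) : Prop := Congruence {
  eqv_refl : forall d, eqv d d;
  eqv_sym : forall d e, eqv d e -> eqv e d;
  eqv_trans : forall d e f, eqv d e -> eqv e f -> eqv d f;
  interp_resp : forall f a b, List.Forall2 eqv a b -> eqv (I f a) (I f b);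
  pred_resp : forall p a b, List.Forall2 eqv a b -> P p a -> P p b }.

Lemma Forall2_map (X D : Type) (eqv : D -> D -> Prop) (h k : X -> D) l :
  List.Forall (fun x => eqv (h x) (k x)) l -> List.Forall2 eqv (map h l) (map k l).
Proof. by elim=> //= x l' H _ IH; constructor. Qed.

Section Soundness.
Variables (D : Type) (eqv : D -> D -> Prop) (P : Pr -> seq D -> Prop) (I : fsym -> seq D -> D).
Hypothesis congrI : congruence eqv P I.
Local Notation teval := (teval I).
Local Notation feval := (feval eqv P I).

Lemma teval_resp t v w : (forall n, eqv (v n) (w n)) -> eqv (teval v t) (teval w t).
Proof.
move=> H; elim/term_ind': t => [n|f ts IH] //=.
by apply: (interp_resp congrI); apply: Forall2_map.
Qed.

Lemma feval_resp A v w : (forall n, eqv (v n) (w n)) -> feval v A -> feval w A.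
Proof.
have Hscons v' w' d : (forall n, eqv (v' n) (w' n)) -> forall n, eqv (scons d v' n) (scons d w' n).
  by move=> H [|n] //=; apply: (eqv_refl congrI).
elim: A v w => /= [p ts|t u|B IH|B IH C IH'|B IH C IH'|B IH|B IH] v w H.
- apply: (pred_resp congrI); apply: Forall2_map; apply/List.Forall_forall => u _.
  exact: teval_resp.
- move=> Htu; apply: (eqv_trans congrI) (teval_resp _ H); apply: (eqv_trans congrI) Htu.
  by apply: (eqv_sym congrI); apply: teval_resp.
- by move=> HnB HB; apply: HnB (IH w v _ HB) => n; apply: (eqv_sym congrI).
- by case=> HB HC; split; [apply: IH HB|apply: IH' HC].
- by case=> [HB|HC]; [left; apply: IH HB|right; apply: IH' HC].
- by move=> HB d; apply: IH (HB d); apply: Hscons.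
- by case=> d HB; exists d; apply: IH HB; apply: Hscons.
Qed.

Lemma nd_sound Gm A : nd Gm A -> forall v, (forall B, List.In B Gm -> feval v B) -> feval v A.
Proof.
elim=> {Gm A} Gm /=.
- by move=> A HA v HGm; apply: HGm.
- by move=> A B _ HA _ HB v HGm; split; [apply: HA|apply: HB].
- by move=> A B _ HAB v HGm; case: (HAB v HGm).
- by move=> A B _ HAB v HGm; case: (HAB v HGm).
- by move=> A B _ HA v HGm; left; apply: HA.
- by move=> A B _ HB v HGm; right; apply: HB.
- move=> A B C _ HAB _ HA _ HB v HGm.
  case: (HAB v HGm) => H; [apply: HA|apply: HB];
    by move=> E [<-|HE] //; apply: HGm.
- move=> A B _ HB _ HnB v HGm HA.
  have HGm' E : List.In E (A :: Gm) -> feval v E by case=> [<-|HE] //; apply: HGm.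
  exact: (HnB v HGm') (HB v HGm').
- move=> A B _ HB _ HnB v HGm; apply: NNPP => HnA.
  have HGm' E : List.In E (Neg A :: Gm) -> feval v E by case=> [<-|HE] //; apply: HGm.
  exact: (HnB v HGm') (HB v HGm').
- move=> A _ HA v HGm d; apply: HA => _ /List.in_map_iff [E [<- HE]].
  by rewrite feval_shift; apply: HGm.
- by move=> A t _ _ HA v HGm; rewrite feval_inst; apply: HA.
- by move=> A t _ _ HA v HGm; exists (teval v t); rewrite -feval_inst; apply: HA.
- move=> A B _ HA _ HB v HGm; case: (HA v HGm) => d Hd.
  rewrite -(feval_shift eqv P I v d); apply: HB => _ [<-|/List.in_map_iff [E [<- HE]]] //.
  by rewrite feval_shift; apply: HGm.
- by move=> t _ v HGm; apply: (eqv_refl congrI).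
- move=> A t u _ Htu _ HA v HGm; rewrite feval_inst; move: (HA v HGm); rewrite feval_inst.
  by apply: feval_resp => -[|n] //=; [apply: Htu|apply: (eqv_refl congrI)].
Qed.

End Soundness.

(** * Skolem expansions *)

Section SkolemExpansion.
Variables (D : Type) (eqv : D -> D -> Prop) (P : Pr -> seq D -> Prop).
Variables (Ib : F -> seq D -> D) (d0 : D).
Implicit Types (v : nat -> D) (d e : D).

Definition skolem_env Q B (args : seq D) : nat -> D :=
  fun k => nth d0 args (index k (fvs (quantf Q B))).

(* The Skolem expansion of the structure [(D, eqv, P, Ib)]: the Skolem symbol
   s_{QxB}, applied to the values of FV(QxB), picks by Hilbert choice a witness
   of [B] when Q = Ex and a counterexample to [B] when Q = All.  [sk_teval] and
   [sk_feval] are [teval] and [feval] for this interpretation ([sk_fevalE]),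
   duplicated only to make the mutual definition possible. *)
Fixpoint sk_teval v t : D :=
  match t with Defs.var n => v n | app f ts => sk_interp f (map (sk_teval v) ts) end
with sk_interp (f : fsym) (args : seq D) : D :=
  match f with
  | base g => Ib g args
  | skol Q B => epsilon (inhabits d0) (fun d =>
      if Q is Qex then sk_feval (scons d (skolem_env Q B args)) B
      else ~ sk_feval (scons d (skolem_env Q B args)) B)
  end
with sk_feval v A : Prop :=
  match A with
  | Atom p ts => P p (map (sk_teval v) ts)
  | Eq t u => eqv (sk_teval v t) (sk_teval v u)
  | Neg B => ~ sk_feval v B
  | And B C => sk_feval v B /\ sk_feval v C
  | Or B C => sk_feval v B \/ sk_feval v C
  | All B => forall d, sk_feval (scons d v) B
  | Ex B => exists d, sk_feval (scons d v) B
  end.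

Local Notation teval := (teval sk_interp).
Local Notation feval := (feval eqv P sk_interp).

Lemma sk_tevalE t v : sk_teval v t = teval v t.
Proof.
elim/term_ind': t => //= f ts IH; congr sk_interp; apply: eq_map_Forall.
by apply: List.Forall_impl IH => u; apply.
Qed.

Lemma sk_fevalE A v : sk_feval v A = feval v A.
Proof.
elim: A v => /= [p ts|t u|B IH|B IH C IH'|B IH C IH'|B IH|B IH] v; rewrite ?sk_tevalE ?IH ?IH' //.
- by congr P; apply: eq_map_In => u _; rewrite sk_tevalE.
- by apply: eq_forall => d; rewrite IH.
- by apply: eq_exists => d; rewrite IH.
Qed.

Lemma mem_fvs A k : (k \in fvs A) = occf k A.
Proof.
rewrite /fvs mem_filter mem_iota add0n /=.
by case Hk: (occf k A) => //=; rewrite (occf_bound Hk).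
Qed.

Definition skolem_term Q B : term := app (skol Q B) (map var (fvs (quantf Q B))).

Lemma teval_skolem_term Q B v : teval v (skolem_term Q B) =
  epsilon (inhabits d0) (fun d => if Q is Qex then feval (scons d v) B
                                  else ~ feval (scons d v) B).
Proof.
have Henv d : sk_feval (scons d (skolem_env Q B (map v (fvs (quantf Q B))))) B =
              feval (scons d v) B.
  rewrite sk_fevalE; apply: eq_feval => -[|k] //= Hk.
  have Hm : k \in fvs (quantf Q B) by rewrite mem_fvs; case: Q.
  by rewrite /skolem_env (nth_map 0) ?index_mem // nth_index.
rewrite /= -map_comp; congr epsilon; apply: functional_extensionality => d.
by rewrite Henv.
Qed.

Lemma skolem_term_spec Q B v :
  let c := teval v (skolem_term Q B) in
  if Q is Qex then (exists e, feval (scons e v) B) -> feval (scons c v) B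
  else feval (scons c v) B -> forall e, feval (scons e v) B.
Proof.
move=> c; rewrite {}/c teval_skolem_term; case: Q.
- move=> Hd e; apply: NNPP => He.
  by apply: (@epsilon_spec _ _ (fun d => ~ feval (scons d v) B)) Hd; exists e.
- exact: (@epsilon_spec _ _ (fun d => feval (scons d v) B)).
Qed.

Lemma feval_fsubst_up e v s B :
  feval (scons e v) (fsubst (up s) B) = feval (scons e (fun n => teval v (s n))) B.
Proof. by rewrite feval_subst teval_up. Qed.

Lemma teval_scons_subst v t s :
  (fun n => teval v (match n with 0 => t | k.+1 => s k end)) =
  scons (teval v t) (fun n => teval v (s n)).
Proof. by apply: functional_extensionality => -[|n]. Qed.

(* Negation swaps sk^Ex and sk^All, so both directions are proved together. *)
Lemma skS_sound A s v :
  (feval v (fsubst s A) -> feval v (skS Qex s A)) /\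
  (feval v (skS Qall s A) -> feval v (fsubst s A)).
Proof.
elim: A s v => //= [B IH|B IH C IH'|B IH C IH'|B IH|B IH] s v.
- by have [H1 H2] := IH s v; split=> HnB HB; apply: HnB; [apply: H2|apply: H1].
- by have [H1 H2] := IH s v; have [H3 H4] := IH' s v; split=> -[HB HC]; split; auto.
- by have [H1 H2] := IH s v; have [H3 H4] := IH' s v; split=> -[HB|HC]; auto.
- split=> [HB d|/(proj2 (IH _ _))]; first exact: (proj1 (IH _ _)).
  rewrite feval_subst teval_scons_subst -(feval_fsubst_up _ v s).
  exact: (skolem_term_spec Qall (fsubst (up s) B) v).
- split=> [HB|[d HB]]; last by exists d; apply: (proj2 (IH _ _)).
  apply: (proj1 (IH _ _)); rewrite feval_subst teval_scons_subst -(feval_fsubst_up _ v s).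
  exact: (skolem_term_spec Qex (fsubst (up s) B) v).
Qed.

Lemma feval_sk_ex A v : feval v A -> feval v (sk Qex A).
Proof. by move=> HA; apply: (proj1 (skS_sound _ _ _)); rewrite fsubst_var. Qed.

End SkolemExpansion.

Section SkolemCongruence.
Variables (D : Type) (eqv : D -> D -> Prop) (P : Pr -> seq D -> Prop).
Variables (Ib : F -> seq D -> D) (d0 : D).
Hypothesis congrIb : congruence eqv P Ib.
Local Notation sk_teval := (sk_teval eqv P Ib d0).
Local Notation sk_interp := (sk_interp eqv P Ib d0).
Local Notation sk_feval := (sk_feval eqv P Ib d0).

Lemma Forall2_nth a b i : List.Forall2 eqv a b -> eqv (nth d0 a i) (nth d0 b i).
Proof.
move=> Hab; elim: Hab i => [|x y a' b' Hxy _ IH] [|i] //=; exact: (eqv_refl congrIb).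
Qed.

Lemma Forall2_sym a b : List.Forall2 eqv a b -> List.Forall2 eqv b a.
Proof. by elim=> // x y a' b' H _ IH; constructor; [apply: (eqv_sym congrIb)|]. Qed.

Lemma sk_interp_resp f a b : List.Forall2 eqv a b -> eqv (sk_interp f a) (sk_interp f b).
Proof.
have Hscons d v w : (forall n, eqv (v n) (w n)) -> forall n, eqv (scons d v n) (scons d w n).
  by move=> H [|n] //=; apply: (eqv_refl congrIb).
move: f a b; apply: (@syntax_fsym_ind
  (fun t => forall v w, (forall n, eqv (v n) (w n)) -> eqv (sk_teval v t) (sk_teval w t))
  (fun f => forall a b, List.Forall2 eqv a b -> eqv (sk_interp f a) (sk_interp f b))
  (fun A => forall v w, (forall n, eqv (v n) (w n)) -> (sk_feval v A <-> sk_feval w A))).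
- by move=> n v w H /=.
- move=> f ts Hf Hts v w H /=; apply: Hf; apply: Forall2_map.
  by apply: List.Forall_impl Hts => u; apply.
- exact: (interp_resp congrIb).
- move=> Q B IH a b H /=.
  have eqv_of_eq x y : x = y -> eqv x y by move=> ->; apply: (eqv_refl congrIb).
  apply: eqv_of_eq; congr epsilon; apply: functional_extensionality => d.
  have HB : sk_feval (scons d (skolem_env d0 Q B a)) B <->
            sk_feval (scons d (skolem_env d0 Q B b)) B.
    by apply: IH => -[|n] /=; [apply: (eqv_refl congrIb)|apply: Forall2_nth].
  by apply: propositional_extensionality; move: HB; case: Q; tauto.
- move=> p ts Hts v w H /=.
  have Hargs : List.Forall2 eqv (map (sk_teval v) ts) (map (sk_teval w) ts).
    by apply: Forall2_map; apply: List.Forall_impl Hts => u; apply.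
  by split; apply: (pred_resp congrIb); [|apply: Forall2_sym].
- move=> t u Ht Hu v w H /=; have Etu := Ht v w H; have Euu := Hu v w H.
  have [_ Hsym Htr _ _] := congrIb.
  by split=> Heq; [apply: Htr (Hsym _ _ Etu) (Htr _ _ _ Heq Euu)|
                   apply: Htr Etu (Htr _ _ _ Heq (Hsym _ _ Euu))].
- by move=> B IH v w H /=; have := IH v w H; tauto.
- by move=> B C IH IH' v w H /=; have := IH v w H; have := IH' v w H; tauto.
- by move=> B C IH IH' v w H /=; have := IH v w H; have := IH' v w H; tauto.
- by move=> B IH v w H /=; split=> HB d; apply/(IH (scons d v) (scons d w)) => //; apply: Hscons.
- move=> B IH v w H /=; split=> -[d HB]; exists d;
    by apply/(IH (scons d v) (scons d w)) => //; apply: Hscons.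
Qed.

Lemma sk_interp_congruence : congruence eqv P sk_interp.
Proof.
by case: congrIb => *; split=> //; apply: sk_interp_resp.
Qed.

End SkolemCongruence.

Lemma feval_Lformula (arP : Pr -> nat) (D : Type) (eqv : D -> D -> Prop)
    (P : Pr -> seq D -> Prop) (I1 I2 : fsym -> seq D -> D) :
  (forall g, I1 (base Pr g) = I2 (base Pr g)) ->
  forall A, Lformula arF arP A -> forall v, feval eqv P I1 v A = feval eqv P I2 v A.
Proof.
move=> HI.
have Hterm t : termIn arF (@isBase F Pr) t -> forall v, teval I1 v t = teval I2 v t.
  elim/term_ind': t => [n|f ts IH] //= [[g ->] _ /foldr_andP Hts] v; rewrite HI; congr I2.
  apply: eq_map_In => u Hu; move/List.Forall_forall: IH => /(_ u Hu (Hts u Hu)); apply.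
elim=> /= [p ts|t u|B IH|B IH C IH'|B IH C IH'|B IH|B IH].
- case=> _ /foldr_andP Hts v; congr P; apply: eq_map_In => u Hu; exact: Hterm (Hts u Hu) v.
- by case=> Ht Hu v; rewrite (Hterm t Ht) (Hterm u Hu).
- by move=> HB v; rewrite IH.
- by case=> HB HC v; rewrite IH // IH'.
- by case=> HB HC v; rewrite IH // IH'.
- by move=> HB v; apply: eq_forall => d; rewrite IH.
- by move=> HB v; apply: eq_exists => d; rewrite IH.
Qed.

(** * Induction axioms *)

Section InductionSemantics.
Variables (zero succ : F).

Definition subst_zero n := if n is k.+1 then var k else app (base Pr zero) [::].
Definition subst_succ n := if n is k.+1 then var k.+1 else app (base Pr succ) [:: var 0].

Definition ind_matrix phi :=
  Imp (And (fsubst subst_zero phi) (All (Imp phi (fsubst subst_succ phi)))) (All phi).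

Lemma Ind0E phi : Ind0 zero succ phi = iter (fbound phi).-1 (@All F Pr) (ind_matrix phi).
Proof. by []. Qed.

Lemma fbound_ind_matrix phi : fbound (ind_matrix phi) <= (fbound phi).-1.
Proof.
rewrite /ind_matrix /Imp /= !geq_max leqnn andbT.
have -> : fbound (fsubst subst_zero phi) <= (fbound phi).-1.
  by apply: fbound_subst => -[|n] //=; case: (fbound phi).
rewrite -!subn1 leq_sub2r // geq_max leqnn /=.
by apply: fbound_subst => -[|n] //=; case: (fbound phi).
Qed.

Variables (D : Type) (eqv : D -> D -> Prop) (P : Pr -> seq D -> Prop) (I : fsym -> seq D -> D).
Local Notation teval := (teval I).
Local Notation feval := (feval eqv P I).
Implicit Types (v w : nat -> D) (d : D).

Definition ind_valid (Pd : D -> Prop) :=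
  Pd (I (base Pr zero) [::]) -> (forall d, Pd d -> Pd (I (base Pr succ) [:: d])) ->
  forall d, Pd d.

Definition upd v x d := fun j => if j == x then d else v j.

Lemma feval_ind_matrix phi w :
  feval w (ind_matrix phi) <-> ind_valid (fun d => feval (scons d w) phi).
Proof.
rewrite /ind_matrix /Imp /ind_valid /= feval_subst.
have -> : (fun n => teval w (subst_zero n)) = scons (I (base Pr zero) [::]) w.
  by apply: functional_extensionality => -[|n].
have Hsucc d : feval (scons d w) (fsubst subst_succ phi) =
               feval (scons (I (base Pr succ) [:: d]) w) phi.
  by rewrite feval_subst; congr feval; apply: functional_extensionality => -[|n].
split=> [[HnH H0 Hs d|Hall _ _ d]|H]; [|exact: Hall|].
- exfalso; apply: HnH; split=> // e; rewrite Hsucc.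
  by case: (classic (feval (scons e w) phi)) => He; [right; apply: Hs|left].
- have [Hall|Hnall] := classic (forall d, feval (scons d w) phi); [by right|left].
  case=> H0 Hs; apply/Hnall/H => // d Hd.
  by case: (Hs d) => //; rewrite Hsucc.
Qed.

Lemma feval_iter_All_inv m psi v : feval v (iter m (@All F Pr) psi) ->
  forall w, feval (fun n => if n < m then w n else v (n - m)) psi.
Proof.
elim: m v => [|m IH] v /= H w.
  by move: H; congr feval; apply: functional_extensionality => n; rewrite subn0.
have := IH _ (H (w m)) w; congr feval; apply: functional_extensionality => n.
case: (ltngtP n m) => Hnm.
- by rewrite (ltn_trans Hnm (ltnSn m)).
- have -> : (n < m.+1) = false by rewrite ltnS leqNgt Hnm.
  by case E: (n - m) => [|k] /=; [move/eqP: E; rewrite subn_eq0 leqNgt Hnm|rewrite subnS E].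
- by rewrite Hnm ltnSn subnn.
Qed.

Lemma feval_iter_All m psi : (forall w, feval w psi) -> forall v, feval v (iter m (@All F Pr) psi).
Proof. by move=> H; elim: m => [|m IH] v //= d. Qed.

Lemma feval_Ind0 phi v :
  feval v (Ind0 zero succ phi) <-> forall w, ind_valid (fun d => feval (scons d w) phi).
Proof.
rewrite Ind0E; split=> [/feval_iter_All_inv H w|H]; last first.
  by apply: feval_iter_All => w; apply/feval_ind_matrix.
apply/feval_ind_matrix; have := H w; rewrite (@eq_feval_bound _ _ _ _ _ _ w) // => n Hn.
by rewrite (leq_trans Hn (fbound_ind_matrix phi)).
Qed.

Lemma feval_Ix x g v :
  feval v (Ix zero succ x g) <-> forall w, ind_valid (fun d => feval (upd w x d) g).
Proof.
have E w : (fun d => feval (scons d w) (fsubst (fun j => if j == x then var 0 else var j.+1) g)) =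
           (fun d => feval (upd w x d) g).
  apply: functional_extensionality => d; rewrite feval_subst; congr feval.
  by apply: functional_extensionality => j; rewrite /upd; case: (j == x).
by rewrite feval_Ind0; split=> H w; [rewrite -E|rewrite E].
Qed.

Lemma teval_ground t v w : ground t -> teval v t = teval w t.
Proof. by rewrite /ground => Ht; apply: eq_teval => n /occt_bound; rewrite Ht. Qed.

(* Substituting ground terms only fixes parameters of the induction formula,
   or makes it independent of the induction variable. *)
Lemma feval_Ix_ground_instance x g s v :
  (forall j, s j = var j \/ ground (s j)) ->
  feval v (Ix zero succ x g) -> feval v (Ix zero succ x (fsubst s g)).
Proof.
move=> Hs /feval_Ix Hind; apply/feval_Ix => w.
have Einst d : feval (upd w x d) (fsubst s g) = feval (fun j => teval (upd w x d) (s j)) g.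
  by rewrite feval_subst.
case: (Hs x) => Hx.
- have Eupd d : (fun j => teval (upd w x d) (s j)) = upd (fun j => teval w (s j)) x d.
    apply: functional_extensionality => j; rewrite /upd.
    case: eqP => [->|Hj]; first by rewrite Hx /= /upd eqxx.
    case: (Hs j) => [->|Hg] /=; first by rewrite /upd; case: eqP.
    exact: teval_ground.
  have := Hind (fun j => teval w (s j)).
  by congr ind_valid; apply: functional_extensionality => d; rewrite Einst Eupd.
- have Eupd d : (fun j => teval (upd w x d) (s j)) = (fun j => teval w (s j)).
    apply: functional_extensionality => j.
    case: (Hs j) => [Hj|Hg]; last exact: teval_ground.
    rewrite Hj /= /upd; case: eqP => // Ejx; move: Hx; rewrite -Ejx Hj.
    by rewrite /ground.
  by move=> H0 _ d; move: H0; rewrite !Einst !Eupd.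
Qed.

End InductionSemantics.

(** * Completeness for L formulas *)

Section Fragment.
Variables (lf : seq F) (lp : seq Pr).

(* Finitely many base symbols make the language countable (see [nth_formula]),
   as the Henkin construction requires. *)
Fixpoint fragT t : Prop :=
  match t with
  | Defs.var _ => True
  | app f ts => [/\ fragS f, size ts = arity arF f & foldr (fun u Q => fragT u /\ Q) True ts]
  end
with fragS (f : fsym) : Prop :=
  match f with base g => List.In g lf | skol _ B => fragF B end
with fragF A : Prop :=
  match A with
  | Atom p ts => List.In p lp /\ foldr (fun u Q => fragT u /\ Q) True ts
  | Eq t u => fragT t /\ fragT u
  | Neg B => fragF B
  | And B C | Or B C => fragF B /\ fragF C
  | All B | Ex B => fragF B
  end.

Lemma fragT_wf t : fragT t -> wf t.
Proof.
elim/term_ind': t => [n|f ts IH] //= [_ Hsize /foldr_andP Hts]; split=> //.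
by apply/foldr_andP => u Hu; move/List.Forall_forall: IH => /(_ u Hu (Hts u Hu)).
Qed.

Lemma fragT_subst t s : fragT t -> (forall n, fragT (s n)) -> fragT (tsubst s t).
Proof.
elim/term_ind': t => [n|f ts IH] //= [Hf Hsize /foldr_andP Hts] Hs.
split; rewrite ?size_map //; apply/foldr_andP => _ /List.in_map_iff [u [<- Hu]].
by move/List.Forall_forall: IH => /(_ u Hu (Hts u Hu)); apply.
Qed.

Lemma fragT_up s : (forall n, fragT (s n)) -> forall n, fragT (up s n).
Proof. by move=> Hs [|n] //=; apply: fragT_subst. Qed.

Lemma fragF_subst A s : fragF A -> (forall n, fragT (s n)) -> fragF (fsubst s A).
Proof.
elim: A s => /= [p ts|t u|B IH|B IH C IH'|B IH C IH'|B IH|B IH] s.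
- case=> Hp /foldr_andP Hts Hs; split=> //; apply/foldr_andP => _ /List.in_map_iff [u [<- Hu]].
  exact: fragT_subst (Hts u Hu) Hs.
- by case=> Ht Hu Hs; split; apply: fragT_subst.
- exact: IH.
- by case=> HB HC Hs; split; [apply: IH|apply: IH'].
- by case=> HB HC Hs; split; [apply: IH|apply: IH'].
- by move=> HB Hs; apply/IH/fragT_up.
- by move=> HB Hs; apply/IH/fragT_up.
Qed.

Definition dflt : formula := Eq (var 0) (var 0).

Fixpoint decT (x : GenTree.tree nat) : term :=
  match x with
  | GenTree.Leaf n => var n
  | GenTree.Node 0 (f :: ts) => app (decS f) (map decT ts)
  | _ => var 0
  end
with decS (x : GenTree.tree nat) : fsym :=
  match x with
  | GenTree.Node 1 [:: GenTree.Leaf i] =>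
      if nth None (map Some lf) i is Some g then base Pr g else skol Qall dflt
  | GenTree.Node 2 [:: GenTree.Leaf q; b] => skol (if q is 0 then Qall else Qex) (decF b)
  | _ => skol Qall dflt
  end
with decF (x : GenTree.tree nat) : formula :=
  match x with
  | GenTree.Node 3 (GenTree.Leaf i :: ts) =>
      if nth None (map Some lp) i is Some p then Atom p (map decT ts) else dflt
  | GenTree.Node 4 [:: a; b] => Eq (decT a) (decT b)
  | GenTree.Node 5 [:: a] => Neg (decF a)
  | GenTree.Node 6 [:: a; b] => And (decF a) (decF b)
  | GenTree.Node 7 [:: a; b] => Or (decF a) (decF b)
  | GenTree.Node 8 [:: a] => All (decF a)
  | GenTree.Node 9 [:: a] => Ex (decF a)
  | _ => dflt
  end.

Lemma nth_Some_In (X : Type) (l : seq X) x :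
  List.In x l -> exists i, nth None (map Some l) i = Some x.
Proof.
elim: l => //= y l IH [->|/IH [i Hi]]; first by exists 0.
by exists i.+1.
Qed.

Lemma decT_onto_list ts : List.Forall (fun t => fragT t -> exists x, decT x = t) ts ->
  (forall u, List.In u ts -> fragT u) -> exists xs, map decT xs = ts.
Proof.
elim=> [|t l Ht _ IH] H; first by exists [::].
have [x <-] := Ht (H t (or_introl erefl)).
have [xs <-] := IH (fun u Hu => H u (or_intror Hu)).
by exists (x :: xs).
Qed.

Lemma decF_onto A : fragF A -> exists x, decF x = A.
Proof.
move: A; apply: (@syntax_formula_ind (fun t => fragT t -> exists x, decT x = t)
  (fun f => fragS f -> exists x, decS x = f) (fun A => fragF A -> exists x, decF x = A)).
- by move=> n _; exists (GenTree.Leaf n).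
- move=> f ts Hf Hts /= [/Hf [x Hx] _ /foldr_andP Hts'].
  have [xs Hxs] := decT_onto_list Hts Hts'.
  by exists (GenTree.Node 0 (x :: xs)); rewrite /= Hx Hxs.
- move=> g /= Hg; have [i Hi] := nth_Some_In Hg.
  by exists (GenTree.Node 1 [:: GenTree.Leaf i]); rewrite /= Hi.
- move=> Q B IH /= /IH [x <-].
  by exists (GenTree.Node 2 [:: GenTree.Leaf (if Q is Qall then 0 else 1); x]); case: Q.
- move=> p ts Hts /= [Hp /foldr_andP Hts'].
  have [i Hi] := nth_Some_In Hp; have [xs Hxs] := decT_onto_list Hts Hts'.
  by exists (GenTree.Node 3 (GenTree.Leaf i :: xs)); rewrite /= Hi Hxs.
- by move=> t u Ht Hu /= [/Ht [x <-] /Hu [y <-]]; exists (GenTree.Node 4 [:: x; y]).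
- by move=> B IH /= /IH [x <-]; exists (GenTree.Node 5 [:: x]).
- by move=> B C IH IH' /= [/IH [x <-] /IH' [y <-]]; exists (GenTree.Node 6 [:: x; y]).
- by move=> B C IH IH' /= [/IH [x <-] /IH' [y <-]]; exists (GenTree.Node 7 [:: x; y]).
- by move=> B IH /= /IH [x <-]; exists (GenTree.Node 8 [:: x]).
- by move=> B IH /= /IH [x <-]; exists (GenTree.Node 9 [:: x]).
Qed.

Definition nth_formula (n : nat) : formula :=
  if @unpickle (GenTree.tree nat) n is Some x then decF x else dflt.

Lemma nth_formula_onto A : fragF A -> exists n, nth_formula n = A.
Proof. by case/decF_onto => x <-; exists (pickle x); rewrite /nth_formula pickleK. Qed.

Definition consistent Gm := ~ exists C, nd Gm C /\ nd Gm (Neg C).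
Definition ctx_bound Gm := foldr maxn 0 (map (@fbound F Pr) Gm).

(* A variable beyond [ctx_bound] is fresh, so it can serve as a Henkin witness. *)
Lemma consistent_witness B Gm k : consistent (Ex B :: Gm) -> ctx_bound (Ex B :: Gm) <= k ->
  consistent (fsubst (inst (var k)) B :: Ex B :: Gm).
Proof.
move=> Hcons Hk [C [HC HnC]]; apply: Hcons.
pose sg : nat -> term := fun j => if j == k then var 0 else var j.+1.
have Hsg n : wf (sg n) by rewrite /sg; case: (n == k).
have Hfresh X : List.In X (Ex B :: Gm) -> fbound X <= k.
  by move=> HX; apply: leq_trans Hk; apply: (foldr_maxn_ub (@fbound F Pr) HX).
have Hshift X : List.In X (Ex B :: Gm) -> fsubst sg X = shiftf X.
  move=> HX; apply: fsubst_ext => n Hn; rewrite /sg; case: eqP => // Enk.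
  by have := Hfresh X HX; rewrite -Enk leqNgt Hn.
have Hwit : fsubst sg (fsubst (inst (var k)) B) = B.
  rewrite fsubst_comp -[RHS]fsubst_var; apply: fsubst_ext => -[|n] Hn.
    by rewrite /scomp /= /sg eqxx.
  rewrite /scomp /= /sg; case: eqP => // Enk.
  have := Hfresh (Ex B) (or_introl erefl); rewrite /= -Enk.
  by move: Hn; case: (fbound B) => // m; rewrite ltnS => /leq_trans H /H; rewrite ltnn.
have EGm : map (fsubst sg) (fsubst (inst (var k)) B :: Ex B :: Gm) = B :: map shiftf (Ex B :: Gm).
  change (fsubst sg (fsubst (inst (var k)) B) :: map (fsubst sg) (Ex B :: Gm) =
          B :: map shiftf (Ex B :: Gm)).
  by rewrite Hwit; congr cons; apply: eq_map_In => X; apply: Hshift.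
have := nd_fsubst HC Hsg; have := nd_fsubst HnC Hsg; rewrite EGm => HnC' HC'.
exists (Ex B); split; first exact: nd_head.
apply: (nd_exE (A := B)); [exact: nd_head|exact: nd_absurd _ HC' HnC'].
Qed.

Section Lindenbaum.
Variables (E : seq formula) (A : formula).

Fixpoint stage (n : nat) : seq formula :=
  if n is n'.+1 then
    let Gm := stage n' in
    let phi := nth_formula n' in
    if excluded_middle_informative (consistent (phi :: Gm)) then
      if phi is Ex B then fsubst (inst (var (ctx_bound (phi :: Gm)))) B :: phi :: Gm
      else phi :: Gm
    else Gm
  else Neg A :: E.

Lemma stage_consistent_step n : consistent (nth_formula n :: stage n) ->
  stage n.+1 = if nth_formula n is Ex B then
                 fsubst (inst (var (ctx_bound (nth_formula n :: stage n)))) B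
                   :: nth_formula n :: stage n
               else nth_formula n :: stage n.
Proof. by move=> H /=; case: excluded_middle_informative. Qed.

Lemma stage_inconsistent_step n : ~ consistent (nth_formula n :: stage n) -> stage n.+1 = stage n.
Proof. by move=> H /=; case: excluded_middle_informative. Qed.

Lemma in_stage_succ n :
  consistent (nth_formula n :: stage n) -> List.In (nth_formula n) (stage n.+1).
Proof.
by move/stage_consistent_step => ->; case: (nth_formula n) => *; do ?[by left | right; left].
Qed.

Lemma stage_incl_succ n : List.incl (stage n) (stage n.+1).
Proof.
move=> X HX; have [Hc|Hnc] := classic (consistent (nth_formula n :: stage n)).
  by rewrite stage_consistent_step //; case: (nth_formula n) => *; do ?right.
by rewrite stage_inconsistent_step.
Qed.

Lemma stage_incl n m : n <= m -> List.incl (stage n) (stage m).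
Proof. by move/subnK <-; elim: (m - n) => [|k IH] //= X /IH /stage_incl_succ. Qed.

Hypothesis consistent0 : consistent (stage 0).

Lemma stage_consistent n : consistent (stage n).
Proof.
elim: n => // n IH; have [Hc|Hnc] := classic (consistent (nth_formula n :: stage n)).
  rewrite stage_consistent_step //; move: Hc.
  by case: (nth_formula n) => // B HB; apply: consistent_witness.
by rewrite stage_inconsistent_step.
Qed.

Definition Th X := exists n, nd (stage n) X.

Lemma Th_common_stage X Y : Th X -> Th Y -> exists n, nd (stage n) X /\ nd (stage n) Y.
Proof.
case=> n Hn [m Hm]; exists (maxn n m).
by split; [apply: (nd_weaken Hn)|apply: (nd_weaken Hm)]; apply: stage_incl;
  rewrite ?leq_maxl ?leq_maxr.
Qed.

Lemma Th_consistent X : Th X -> Th (Neg X) -> False.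
Proof.
move=> HX HnX; have [n [Hn Hn']] := Th_common_stage HX HnX.
exact: stage_consistent (ex_intro _ X (conj Hn Hn')).
Qed.

Lemma Th_complete X : fragF X -> Th X \/ Th (Neg X).
Proof.
case/nth_formula_onto => n <-; have [Hc|Hnc] := classic (consistent (nth_formula n :: stage n)).
  by left; exists n.+1; apply/nd_ax/in_stage_succ.
right; exists n; apply: NNPP => Hn; apply: Hnc => -[C [HC HnC]]; apply: Hn.
exact: nd_negI HC HnC.
Qed.

Lemma Th_witness B : fragF (Ex B) -> Th (Ex B) -> exists k, Th (fsubst (inst (var k)) B).
Proof.
move=> Hf HB; have [n En] := nth_formula_onto Hf.
have [Hc|Hnc] := classic (consistent (nth_formula n :: stage n)).
  exists (ctx_bound (nth_formula n :: stage n)), n.+1.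
  by rewrite stage_consistent_step // En; apply: nd_head.
exfalso; apply: (Th_consistent HB); exists n; rewrite -En.
apply: NNPP => Hn; apply: Hnc => -[C [HC HnC]]; apply: Hn; exact: nd_negI HC HnC.
Qed.

Lemma Th_closed1 X Y : Th X -> (forall Gm, nd Gm X -> nd Gm Y) -> Th Y.
Proof. by case=> n Hn H; exists n; apply: H. Qed.

Lemma Th_closed2 X Y Z : Th X -> Th Y -> (forall Gm, nd Gm X -> nd Gm Y -> nd Gm Z) -> Th Z.
Proof. by move=> HX HY H; have [n [Hn Hn']] := Th_common_stage HX HY; exists n; apply: H. Qed.

Lemma Th_all B : fragF (All B) -> (forall k, Th (fsubst (inst (var k)) B)) -> Th (All B).
Proof.
move=> Hf H; case: (Th_complete Hf) => // HnB.
have HE : Th (Ex (Neg B)) by apply: Th_closed1 HnB _ => Gm; apply: nd_not_all.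
by have [k Hk] := @Th_witness (Neg B) Hf HE; case: (Th_consistent (H k) Hk).
Qed.

Definition tm := {t : term | fragT t}.
Definition tm_eqv (d e : tm) := Th (Eq (sval d) (sval e)).
Definition tm_pred p (a : seq tm) := Th (Atom p (map sval a)).
Definition tm_var n : tm := exist _ (var n) I.

Lemma fragT_app f (a : seq tm) : fragS f -> size a = arity arF f -> fragT (app f (map sval a)).
Proof.
move=> Hf Ha /=; split; rewrite ?size_map //.
by apply/foldr_andP => _ /List.in_map_iff [d [<- _]]; apply: (proj2_sig d).
Qed.

(* Ill-formed applications get the junk value [tm_var 0]. *)
Definition tm_interp (f : fsym) (a : seq tm) : tm :=
  match excluded_middle_informative (fragS f /\ size a = arity arF f) with
  | left H => exist _ (app f (map sval a)) (fragT_app (proj1 H) (proj2 H))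
  | right _ => tm_var 0
  end.

Lemma tm_interpE f a : fragS f -> size a = arity arF f -> sval (tm_interp f a) = app f (map sval a).
Proof. by move=> Hf Ha; rewrite /tm_interp; case: excluded_middle_informative => // -[]. Qed.

Lemma teval_tm t v : fragT t -> sval (teval tm_interp v t) = tsubst (fun n => sval (v n)) t.
Proof.
elim/term_ind': t => [n|f ts IH] //= [Hf Hsize /foldr_andP Hts].
rewrite tm_interpE ?size_map // -map_comp; congr app; apply: eq_map_In => u Hu /=.
by move/List.Forall_forall: IH => /(_ u Hu (Hts u Hu)); apply.
Qed.

Lemma fsubst_scons_sval (d : tm) (v : nat -> tm) B :
  fsubst (fun n => sval (scons d v n)) B =
  fsubst (inst (sval d)) (fsubst (up (fun n => sval (v n))) B).
Proof.
rewrite fsubst_comp; congr fsubst; apply: functional_extensionality => -[|n] //=.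
by rewrite /scomp /= tsubst_inst_shift.
Qed.

Lemma tm_truth X v : fragF X ->
  feval tm_eqv tm_pred tm_interp v X <-> Th (fsubst (fun n => sval (v n)) X).
Proof.
elim: X v => /= [p ts|t u|B IH|B IH C IH'|B IH C IH'|B IH|B IH] v;
  have Hv n : fragT (sval (v n)) := proj2_sig (v n).
- case=> _ /foldr_andP Hts; rewrite /tm_pred -map_comp.
  by rewrite (@eq_map_In _ _ _ (tsubst (fun n => sval (v n)))) // => u Hu /=; apply/teval_tm/Hts.
- by case=> Ht Hu; rewrite /tm_eqv !teval_tm.
- move=> HB; rewrite IH //; split=> [HnB|H H']; last exact: Th_consistent H' H.
  by case: (Th_complete (fragF_subst HB Hv)).
- case=> HB HC; rewrite IH // IH' //; split=> [[H H']|H].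
    by apply: Th_closed2 H H' _ => Gm; apply: nd_andI.
  by split; apply: Th_closed1 H _ => Gm; [apply: nd_andE1|apply: nd_andE2].
- case=> HB HC; rewrite IH // IH' //; split=> [[H|H]|H].
  + by apply: Th_closed1 H _ => Gm; apply: nd_orI1.
  + by apply: Th_closed1 H _ => Gm; apply: nd_orI2.
  + case: (Th_complete (fragF_subst HB Hv)) => HnB; [by left|right].
    apply: Th_closed2 H HnB _ => Gm Hor HnB'; apply: (nd_orE Hor); last exact: nd_head.
    by apply: (nd_absurd _ nd_head); apply: (nd_weaken HnB') => Y HY; right.
- move=> HB; split=> [H|H d].
    apply: Th_all => //; first exact: fragF_subst HB (fragT_up Hv).
    by move=> k; rewrite -[var k]/(sval (tm_var k)) -fsubst_scons_sval; apply/IH.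
  apply/IH => //; rewrite fsubst_scons_sval; apply: Th_closed1 H _ => Gm H'.
  exact/nd_allE/H'/fragT_wf/(proj2_sig d).
- move=> HB; split=> [[d /IH] |H].
    rewrite fsubst_scons_sval => /(_ HB) H; apply: Th_closed1 H _ => Gm H'.
    exact: nd_exI (fragT_wf (proj2_sig d)) H'.
  have [k Hk] := Th_witness (fragF_subst HB (fragT_up Hv)) H.
  by exists (tm_var k); apply/IH; rewrite ?fsubst_scons_sval.
Qed.

Lemma Th_Forall2 (a b : seq tm) : List.Forall2 tm_eqv a b ->
  exists n, List.Forall2 (fun t u => nd (stage n) (Eq t u)) (map sval a) (map sval b).
Proof.
elim=> [|d e a' b' [m Hm] _ [n Hn]]; first by exists 0.
exists (maxn n m); constructor.
- by apply: (nd_weaken Hm); apply/stage_incl/leq_maxr.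
- by apply: List.Forall2_impl Hn => t u H; apply: (nd_weaken H); apply/stage_incl/leq_maxl.
Qed.

Lemma tm_eqv_refl d : tm_eqv d d.
Proof. by exists 0; apply/nd_refl/(fragT_wf (proj2_sig d)). Qed.

Lemma tm_interp_resp f a b : List.Forall2 tm_eqv a b -> tm_eqv (tm_interp f a) (tm_interp f b).
Proof.
move=> Hab; have Hsize : size a = size b := List.Forall2_length Hab.
have [[Hf Ha]|Hn] := classic (fragS f /\ size a = arity arF f).
  rewrite /tm_eqv !tm_interpE -?Hsize //.
  have [n Hn] := Th_Forall2 Hab; exists n.
  by apply: nd_cong_app Hn _; apply: fragT_wf; apply: fragT_app.
rewrite /tm_interp; destruct (excluded_middle_informative (fragS f /\ size a = arity arF f)) => //.
destruct (excluded_middle_informative (fragS f /\ size b = arity arF f)) as [[Hf Hb]|].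
  by case: Hn; rewrite Hsize.
exact: tm_eqv_refl.
Qed.

Lemma tm_pred_resp p a b : List.Forall2 tm_eqv a b -> tm_pred p a -> tm_pred p b.
Proof.
move=> Hab [m Hm]; have [n Hn] := Th_Forall2 Hab; exists (maxn n m).
apply: nd_cong_atom; last by apply: (nd_weaken Hm); apply/stage_incl/leq_maxr.
by apply: List.Forall2_impl Hn => t u H; apply: (nd_weaken H); apply/stage_incl/leq_maxl.
Qed.

Lemma tm_congruence : congruence tm_eqv tm_pred tm_interp.
Proof.
split; [exact: tm_eqv_refl| | |exact: tm_interp_resp|exact: tm_pred_resp].
- move=> d e H; apply: Th_closed1 H _ => Gm H.
  by apply: nd_eq_sym H; apply: fragT_wf (proj2_sig d).
- by move=> d e f H H'; apply: Th_closed2 H H' _ => Gm; apply: nd_eq_trans.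
Qed.

Lemma tm_truth_var X : fragF X -> feval tm_eqv tm_pred tm_interp tm_var X <-> Th X.
Proof. by move=> HX; rewrite tm_truth // fsubst_var. Qed.
End Lindenbaum.

End Fragment.

Definition eventually (Q : seq F -> seq Pr -> Prop) :=
  exists lf lp, forall lf' lp', List.incl lf lf' -> List.incl lp lp' -> Q lf' lp'.

Lemma eventually_and Q1 Q2 : eventually Q1 -> eventually Q2 ->
  eventually (fun lf lp => Q1 lf lp /\ Q2 lf lp).
Proof.
case=> [lf1 [lp1 H1]] [lf2 [lp2 H2]]; exists (lf1 ++ lf2), (lp1 ++ lp2) => lf lp Hf Hp.
have [Hf1 Hf2] := List.incl_app_inv _ _ Hf; have [Hp1 Hp2] := List.incl_app_inv _ _ Hp.
by split; [apply: H1|apply: H2].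
Qed.

Lemma eventually_mono (Q1 Q2 : seq F -> seq Pr -> Prop) :
  (forall lf lp, Q1 lf lp -> Q2 lf lp) -> eventually Q1 -> eventually Q2.
Proof. by move=> H [lf [lp H1]]; exists lf, lp => *; apply/H/H1. Qed.

Lemma eventually_all (X : Type) (Q : X -> seq F -> seq Pr -> Prop) (l : seq X) :
  (forall x, List.In x l -> eventually (Q x)) ->
  eventually (fun lf lp => forall x, List.In x l -> Q x lf lp).
Proof.
elim: l => [|x l IH] H; first by exists [::], [::].
have := eventually_and (H x (or_introl erefl)) (IH (fun y Hy => H y (or_intror Hy))).
by apply: eventually_mono => lf lp [Hx Hl] y [<-|Hy]; [|apply: Hl].
Qed.

Lemma eventually_fragT t : termIn arF (@isBase F Pr) t -> eventually (fun lf lp => fragT lf lp t).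
Proof.
elim/term_ind': t => [n|f ts IH] /=; first by exists [::], [::].
case=> [[g ->] Hsize /foldr_andP Hts].
have Hg : eventually (fun lf lp => List.In g lf).
  by exists [:: g], [::] => lf lp Hf _; apply/Hf; left.
have Hl : eventually (fun lf lp => forall u, List.In u ts -> fragT lf lp u).
  apply: eventually_all => u Hu; move/List.Forall_forall: IH => /(_ u Hu); apply; exact: Hts.
by apply: eventually_mono (eventually_and Hg Hl) => lf lp [H1 /foldr_andP H2].
Qed.

Lemma eventually_fragF (arP : Pr -> nat) A : Lformula arF arP A ->
  eventually (fun lf lp => fragF lf lp A).
Proof.
elim: A => /= [p ts|t u|B IH|B IH C IH'|B IH C IH'|B IH|B IH] //.
- case=> _ /foldr_andP Hts.
  have Hp : eventually (fun lf lp => List.In p lp).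
    by exists [::], [:: p] => lf lp _ Hp; apply/Hp; left.
  have Hl : eventually (fun lf lp => forall u, List.In u ts -> fragT lf lp u).
    by apply: eventually_all => u Hu; apply/eventually_fragT/Hts.
  by apply: eventually_mono (eventually_and Hp Hl) => lf lp [H1 /foldr_andP H2].
- by case=> Ht Hu; apply: eventually_and; apply: eventually_fragT.
- by case=> HB HC; apply: eventually_and; [apply: IH|apply: IH'].
- by case=> HB HC; apply: eventually_and; [apply: IH|apply: IH'].
Qed.

(* The Skolem expansion of the term model of a maximal consistent extension
   of [Neg A :: E] agrees with it on L formulas. *)
Lemma Lformula_complete (arP : Pr -> nat) (E : seq formula) A :
  (forall e, List.In e E -> Lformula arF arP e) -> Lformula arF arP A ->
  (forall (D : Type) (eqv : D -> D -> Prop) P (Ib : F -> seq D -> D) (d0 : D),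
     congruence eqv P Ib -> forall v,
     (forall e, List.In e E -> feval eqv P (sk_interp eqv P Ib d0) v e) ->
     feval eqv P (sk_interp eqv P Ib d0) v A) ->
  nd E A.
Proof.
move=> HE HA Hsem; apply: NNPP => HnA.
have [lf [lp Hlarge]] :
    eventually (fun lf lp => (forall e, List.In e E -> fragF lf lp e) /\ fragF lf lp A).
  apply: eventually_and; last exact: eventually_fragF HA.
  by apply: eventually_all => e /HE; apply: eventually_fragF.
have [HfE HfA] := Hlarge lf lp (List.incl_refl _) (List.incl_refl _).
have cons0 : consistent (stage lf lp E A 0) by case=> C [HC HnC]; apply/HnA/(nd_raa HC HnC).
pose Ib g := @tm_interp lf lp (base Pr g).
pose eqvM := @tm_eqv lf lp E A; pose predM := @tm_pred lf lp E A.
have congrIb : congruence eqvM predM Ib.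
  by have [? ? ? Hinterp ?] := tm_congruence lf lp E A; split=> // g; apply: Hinterp.
have Hexp X : Lformula arF arP X ->
    feval eqvM predM (sk_interp eqvM predM Ib (tm_var lf lp 0)) (tm_var lf lp) X =
    feval eqvM predM (@tm_interp lf lp) (tm_var lf lp) X.
  by move=> HX; apply: feval_Lformula HX _.
have Th0 X : List.In X (stage lf lp E A 0) -> Th lf lp E A X by exists 0; apply: nd_ax.
have HEv e : List.In e E ->
    feval eqvM predM (sk_interp eqvM predM Ib (tm_var lf lp 0)) (tm_var lf lp) e.
  move=> He; rewrite Hexp; last exact: HE.
  by apply/(tm_truth_var cons0 (HfE e He)); apply: Th0; right.
have := Hsem _ _ _ Ib _ congrIb _ HEv; rewrite Hexp // => /(tm_truth_var cons0 HfA) HthA.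
by apply: (Th_consistent cons0 HthA); apply: Th0; left.
Qed.

(** * The axioms of GSI^omega *)

Section LanguageL.
Variable arP : Pr -> nat.
Local Notation Lterm := (termIn arF (@isBase F Pr)).
Local Notation Lformula := (Lformula arF arP).

Lemma Lformula_subst A s : Lformula A -> (forall n, Lterm (s n)) -> Lformula (fsubst s A).
Proof.
elim: A s => /= [p ts|t u|B IH|B IH C IH'|B IH C IH'|B IH|B IH] s.
- case=> Hp /foldr_andP Hts Hs; split; rewrite ?size_map //.
  by apply/foldr_andP => _ /List.in_map_iff [u [<- Hu]]; apply: termIn_tsubst (Hts u Hu) Hs.
- by case=> Ht Hu Hs; split; apply: termIn_tsubst.
- exact: IH.
- by case=> HB HC Hs; split; [apply: IH|apply: IH'].
- by case=> HB HC Hs; split; [apply: IH|apply: IH'].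
- by move=> HB Hs; apply/IH/termIn_up.
- by move=> HB Hs; apply/IH/termIn_up.
Qed.

Lemma Lformula_Ix (zero succ : F) x g : arF zero = 0 -> arF succ = 1 ->
  Lformula g -> Lformula (Ix zero succ x g).
Proof.
move=> Hzero Hsucc Hg; rewrite /Ix Ind0E.
have Hperm : Lformula (fsubst (fun j => if j == x then var 0 else var j.+1) g).
  by apply: Lformula_subst => // n; case: (n == x).
elim: (fbound _).-1 => [|m IH] //=.
split; [split; [|split]|] => //; apply: Lformula_subst => // -[|n] //=.
- by split; [exists zero|rewrite Hzero|].
- by split; [exists succ|rewrite Hsucc|].
Qed.

End LanguageL.

Section GSIAxioms.
Variables (zero succ : F) (T G : theory F Pr).

Lemma GSI_iter_axiom i B : iter i (GSI arF zero succ G) (sk_th Qex T) B ->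
  (exists2 B0, T B0 & B = sk Qex B0) \/
  (exists x g s, [/\ G g, forall j, s j = var j \/ ground (s j) &
                       B = sk Qex (Ix zero succ x (fsubst s g))]).
Proof.
elim: i B => [|i IH] B /=; first by case=> B0 HB0 ->; left; exists B0.
case; first exact: IH.
case=> _ [x [_ [[[g [s [Hg Hs ->]]] _] ->]]] ->; right.
by exists x, g, s; split=> // j; case: (Hs j) => [->|[]]; [left|right].
Qed.

Lemma GSIomega_axiom_reduce B : GSIomega arF zero succ G (sk_th Qex T) B ->
  exists2 E, th_union T (IND zero succ G) E &
    forall (D : Type) (eqv : D -> D -> Prop) P (Ib : F -> seq D -> D) (d0 : D) v,
      feval eqv P (sk_interp eqv P Ib d0) v E -> feval eqv P (sk_interp eqv P Ib d0) v B.
Proof.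
case=> i /GSI_iter_axiom [[B0 HB0 ->]|[x [g [s [Hg Hs ->]]]]].
  by exists B0; [left|move=> *; apply: feval_sk_ex].
exists (Ix zero succ x g); first by right; exists x, g.
by move=> *; apply/feval_sk_ex/feval_Ix_ground_instance.
Qed.

Lemma GSIomega_reduce (Dl : seq formula) :
  (forall B, List.In B Dl -> GSIomega arF zero succ G (sk_th Qex T) B) ->
  exists E : seq formula, (forall e, List.In e E -> th_union T (IND zero succ G) e) /\
    forall (D : Type) (eqv : D -> D -> Prop) P (Ib : F -> seq D -> D) (d0 : D) v,
      (forall e, List.In e E -> feval eqv P (sk_interp eqv P Ib d0) v e) ->
      forall B, List.In B Dl -> feval eqv P (sk_interp eqv P Ib d0) v B.
Proof.
elim: Dl => [|B Dl IH] HDl; first by exists [::].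
have [E [HE HEDl]] := IH (fun C HC => HDl C (or_intror HC)).
have [e He HeB] := GSIomega_axiom_reduce (HDl B (or_introl erefl)).
exists (e :: E); split=> [e' [<-|He']|D eqv P Ib d0 v Hv B' [<-|HB']]; auto.
- by apply: HeB; apply: Hv; left.
- by apply: HEDl => // e' He'; apply: Hv; right.
Qed.

End GSIAxioms.

End Syntax.

Theorem proposition12 (F Pr : Type) (arF : F -> nat) (arP : Pr -> nat)
    (zero succ : F) (Hzero : arF zero = 0) (Hsucc : arF succ = 1)
    (T G : theory F Pr)
    (HT : Ltheory arF arP T) (HG : Ltheory arF arP G) :
  forall A : formula F Pr,
    Lformula arF arP A ->
    provable arF (GSIomega arF zero succ G (sk_th Qex T)) A ->
    provable arF (th_union T (IND zero succ G)) A.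
Proof.
move=> A HA [Dl [HDl Hnd]].
have [E [HE Hsem]] := GSIomega_reduce HDl.
exists E; split=> //; apply: (Lformula_complete _ HA) => [e /HE [/HT //|[x [g [Hg ->]]]]|].
  exact: Lformula_Ix Hzero Hsucc (HG g Hg).
move=> D eqv P Ib d0 congrIb v HEv.
apply: (nd_sound (sk_interp_congruence d0 congrIb) Hnd).
exact: Hsem HEv.
Qed.
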